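(* Let $\alpha\in\Lambda^+(r)$, and let $\Theta: e\mathbf H_r(0)\,\phi(e_\alpha)\to(e_\alpha\mathbf H_r(0)e)^*$ be defined by $\Theta(eh\,\phi(e_\alpha))(x)=\varepsilon(xh)$ for $h\in\mathbf H_r(0)$ and $x\in e_\alpha\mathbf H_r(0)e$. Then $\Theta$ is a well-defined isomorphism of left $e\mathbf H_r(0)e$-modules.
   Context: $\mathbf H_r(0)$ is the $0$-Hecke algebra over $\mathbb C$, generated by $\bar\pi_1,\dots,\bar\pi_{r-1}$ with $\bar\pi_i^2=-\bar\pi_i$, the braid relations, and far commutation. Set $\pi_i=\bar\pi_i+1$; for $w\in\mathfrak S_r$ with reduced word $s_{i_1}\cdots s_{i_p}$, $\pi_w=\pi_{i_1}\cdots\pi_{i_p}$. $w_0$ is the longest element of $\mathfrak S_r$. $\varepsilon:\mathbf H_r(0)\to\mathbb C$ is the linear functional with $\varepsilon(\pi_w)=1$ if $w=w_0$ and $0$ otherwise. $\phi:\mathbf H_r(0)\to\mathbf H_r(0)$ is the algebra involution $\pi_i\mapsto\pi_{r-i}$; it is the Nakayama automorphism for $\varepsilon$, i.e. $\varepsilon(ab)=\varepsilon(b\phi(a))$. $\Lambda^+(r)$ is the set of strong compositions of $r$ and $\ell(\alpha)$ the number of parts. $\{e_\beta:\beta\in\Lambda^+(r)\}$ is a complete set of primitive orthogonal idempotents of $\mathbf H_r(0)$ such that $\mathbf H_r(0)e_\beta$ is the projective indecomposable module with top the simple module indexed by $\beta$. Fix $n$ and put $e=\sum_{\beta\in\Lambda^+(r),\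 \ell(\beta)\le n}e_\beta$. The left $e\mathbf H_r(0)e$-module structure on $(e_\alpha\mathbf H_r(0)e)^*$ is $(y\cdot\delta)(x)=\delta(xy)$ for $y\in e\mathbf H_r(0)e$; the one on $e\mathbf H_r(0)\phi(e_\alpha)$ is left multiplication. *)

From HB Require Import structures.
From mathcomp Require Import all_boot all_order all_fingroup all_algebra all_field.
Set Implicit Arguments. Unset Strict Implicit. Unset Printing Implicit Defensive.
Import Order.TTheory GRing.Theory Num.Theory.
Local Open Scope ring_scope.

(* The simple transposition s_i (1 <= i <= r-1), swapping positions i-1 and i
   (0-based), i.e. the paper's s_i on {1,...,r}.  Identity if i is out of range. *)
Definition sref (r i : nat) : 'S_r :=
  match [pick k : 'I_r | val k == i.-1], [pick k : 'I_r | val k == i] with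
  | Some a, Some b => if (0 < i)%N then tperm a b else 1%g
  | _, _ => 1%g
  end.

Definition linv (r : nat) (w : 'S_r) : nat :=
  #|[set p : 'I_r * 'I_r | (p.1 < p.2)%N && (w p.2 < w p.1)%N]|.

(* A reduced word of w (computed greedily by stripping left descents):
   w = s_{i1} * s_{i2} * ... * s_{ip} (group product of 'S_r). *)
Fixpoint rw_aux (r fuel : nat) (w : 'S_r) : seq nat :=
  if fuel is f.+1 then
    match [pick i : 'I_r | (0 < val i)%N && (linv (sref r i * w)%g < linv w)%N] with
    | Some i => (val i) :: rw_aux f (sref r i * w)%g
    | None => [::]
    end
  else [::].
Definition redword (r : nat) (w : 'S_r) : seq nat := rw_aux (linv w) w.

Definition w0 (r : nat) : 'S_r := perm (@rev_ord_inj r).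

Definition is_comp (r : nat) (b : seq nat) : bool := all (fun k => 0 < k)%N b && (sumn b == r).

(* explicit enumeration of Lambda^+(r): compositions of r.+1 are 1::c or
   (c_1+1)::c' for c = c_1::c' a composition of r *)
Fixpoint comps (r : nat) : seq (seq nat) :=
  if r is r'.+1 then
    [seq 1%N :: c | c <- comps r'] ++
    [seq (head 0%N c).+1 :: behead c | c <- comps r' & c != [::]]
  else [:: [::]].

Definition cdesc (b : seq nat) : seq nat := [seq sumn (take k b) | k <- iota 1 (size b).-1].

Section Hecke.
Variable A : falgType algC.

(* The 0-Hecke algebra H_r(0): A is a finite-dimensional C-algebra with elements
   pb i = \bar\pi_i (1 <= i <= r-1) satisfying the defining relations and such that
   the elements pi_w (w in S_r) form a basis of A (so A ~ H_r(0)). *)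
Definition piw (pb : nat -> A) (r : nat) (w : 'S_r) : A :=
  \prod_(i <- redword w) (1 + pb i).

Definition is_zero_Hecke (r : nat) (pb : nat -> A) : Prop :=
  [/\ forall i, (1 <= i <= r.-1)%N -> pb i * pb i = - pb i,
      forall i, (1 <= i)%N -> (i.+1 <= r.-1)%N ->
        pb i * pb i.+1 * pb i = pb i.+1 * pb i * pb i.+1,
      forall i j, (1 <= i <= r.-1)%N -> (1 <= j <= r.-1)%N -> (i.+1 < j)%N ->
        pb i * pb j = pb j * pb i
    & basis_of fullv [seq piw pb w | w <- enum [set: 'S_r]]].

Definition is_eps (r : nat) (pb : nat -> A) (eps : A -> algC) : Prop :=
  (forall c a b, eps (c *: a + b) = c * eps a + eps b) /\
  (forall w : 'S_r, eps (piw pb w) = (w == w0 r)%:R).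

(* phi : the algebra involution pi_i |-> pi_{r-i} (equivalently pb i |-> pb (r-i));
   by the standing context it is the Nakayama automorphism of eps. *)
Definition is_phi (r : nat) (pb : nat -> A) (eps : A -> algC) (phi : A -> A) : Prop :=
  [/\ forall c a b, phi (c *: a + b) = c *: phi a + phi b,
      forall a b, phi (a * b) = phi a * phi b,
      phi 1 = 1,
      forall i, (1 <= i <= r.-1)%N -> phi (pb i) = pb (r - i)%N
    & forall a b, eps (a * b) = eps (b * phi a)].

(* chi : the character of the one-dimensional simple module indexed by the
   composition b: \bar\pi_i acts by -1 if i is a descent of b, by 0 otherwise. *)
Definition is_simple_char (r : nat) (pb : nat -> A) (b : seq nat) (chi : A -> algC) : Prop :=
  [/\ forall c x y, chi (c *: x + y) = c * chi x + chi y,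
      forall x y, chi (x * y) = chi x * chi y,
      chi 1 = 1
    & forall i, (1 <= i <= r.-1)%N -> chi (pb i) = if i \in cdesc b then -1 else 0].

Definition idem (f : A) : Prop := f * f = f.

Definition primitive_idem (f : A) : Prop :=
  [/\ f != 0, idem f &
      forall g h, idem g -> idem h -> g * h = 0 -> h * g = 0 -> f = g + h ->
        g = 0 \/ h = 0].

(* {e_b : b in Lambda^+(r)} is a complete set of primitive orthogonal idempotents
   with A e_b the projective cover of the simple module indexed by b, i.e.
   e_b acts non-trivially on that (one-dimensional) simple module. *)
Definition is_PIM_idempotents (r : nat) (pb : nat -> A) (chi : seq nat -> A -> algC)
    (ec : seq nat -> A) : Prop :=
  [/\ forall b, b \in comps r -> is_simple_char r pb b (chi b),
      forall b, b \in comps r -> primitive_idem (ec b),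
      forall b c, b \in comps r -> c \in comps r -> ec b * ec c = if b == c then ec b else 0,
      \sum_(b <- comps r) ec b = 1
    & forall b, b \in comps r -> chi b (ec b) != 0].

Definition etrunc (r n : nat) (ec : seq nat -> A) : A :=
  \sum_(b <- comps r | (size b <= n)%N) ec b.

End Hecke.

From Pilot Require Import Defs.
From HB Require Import structures.
From mathcomp Require Import all_boot all_order all_fingroup all_algebra all_field.
From mathcomp Require Import zify.
Import Order.TTheory GRing.Theory Num.Theory.
Set Implicit Arguments. Unset Strict Implicit. Unset Printing Implicit Defensive.

(* By the Nakayama property eps (e_alpha a e h) = eps (a (e h phi(e_alpha))), so Theta sends
   m to e_alpha a e |-> eps (a m).  Well-definedness and (eHe-)linearity are then formal, and
   bijectivity reduces to the nondegeneracy of eps: a nondegenerate form on a finite-dimensional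
   algebra identifies A with its dual through h |-> eps (_ * h), and a functional delta on
   e_alpha A e is the restriction of z |-> delta (e_alpha z e).
   For nondegeneracy write m = sum_w c_w pi_w and pick w of maximal length with c_w <> 0.
   Since pi_j pi_u is pi_u or pi_(s_j u), left multiplication by pi_j for an ascent j of w
   moves the top coefficient to s_j w; iterating up to w_0 gives eps (a m) = c_w <> 0.
   The product rule pi_j pi_u relies on pi_v = pi_j pi_(s_j v) for every descent j of v,
   which is not immediate because pi_v is defined from one particular reduced word: two
   descents j, k of v give the same product, by induction on the length and the commutation
   or braid relation between pi_j and pi_k. *)

Section SimpleTranspositions.
Variable r : nat.
Implicit Types (u v w : 'S_r) (a b j k x : 'I_r).

Definition ord_prev j : 'I_r := Ordinal (leq_ltn_trans (leq_pred j) (ltn_ord j)).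

(* The paper's s_j for 0 < j, on 0-based positions; [stperm 0] is the identity. *)
Definition stperm j : 'S_r := tperm (ord_prev j) j.

(* [j] is a descent of [w] iff [stperm j * w] is shorter than [w] ([linv_stperm_lt]). *)
Definition descent w j : bool := w j < w (ord_prev j).

Lemma ord_prevS j : 0 < j -> j = (ord_prev j).+1 :> nat.
Proof. by move=> j_gt0 /=; rewrite prednK. Qed.

Lemma sref_stperm j : 0 < j -> sref r j = stperm j.
Proof.
move=> j_gt0; rewrite /sref /stperm j_gt0.
case: pickP => [a /eqP aE|/(_ (ord_prev j))]; last by rewrite eqxx.
case: pickP => [b /eqP bE|/(_ j)]; last by rewrite eqxx.
by congr tperm; apply: val_inj.
Qed.

Lemma val_tperm_adj a b x : b = a.+1 :> nat ->
  (tperm a b x : nat) = if x == a :> nat then b : nat else if x == b :> nat then a : nat else x.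
Proof.
move=> abS; case: tpermP => [->|->|xa xb]; rewrite ?eqxx //.
  by rewrite ifN // abS; apply/eqP; lia.
by rewrite !ifN //; apply/eqP=> /val_inj.
Qed.

(* The inversion set of [tperm a b * w] is the image of that of w under the
   swap, plus the single new inversion (a, b). *)
Lemma linv_tperm_adj a b w : b = a.+1 :> nat -> w a < w b ->
  linv (tperm a b * w) = (linv w).+1.
Proof.
move=> abS wab; set s := tperm a b.
pose g (p : 'I_r * 'I_r) := (s p.1, s p.2).
have g_inj : injective g by move=> [p q] [p' q'] [] /perm_inj -> /perm_inj ->.
have s_mono (p q : 'I_r) : p < q -> (p != a :> nat) || (q != b :> nat) -> s p < s q.
  move=> pq ab; rewrite !val_tperm_adj //.
  by repeat (case: ifP => /eqP ?); lia.
pose inv w := [set p : 'I_r * 'I_r | (p.1 < p.2) && (w p.2 < w p.1)].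
have inv_sw : inv (s * w)%g = (a, b) |: (g @: inv w).
  apply/setP=> [[p q]]; rewrite !inE /= !permM; apply/idP/idP.
  - move=> /andP[pq wqp]; have [-> //|neq] := eqVneq (p, q) (a, b).
    apply/orP; right; apply/imsetP; exists (s p, s q); last by rewrite /g /= !tpermK.
    rewrite inE /= wqp andbT; apply: s_mono => //; rewrite -negb_and.
    by apply: contra neq => /andP[/eqP ? /eqP ?]; apply/eqP; congr pair; apply: val_inj.
  - case/orP => [/eqP [-> ->]|/imsetP [[p' q']]].
      by rewrite /s tpermL tpermR wab andbT abS.
    rewrite inE /= => /andP [pq' wqp'] [-> ->]; rewrite !tpermK wqp' andbT.
    apply: s_mono => //; rewrite -negb_and; apply/negP => /andP[/eqP /val_inj pa /eqP /val_inj qb].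
    by move: wqp'; rewrite pa qb ltnNge ltnW.
rewrite /linv -[X in #|pred_of_set X|]/(inv (s * w)%g) inv_sw cardsU1 card_imset //.
suff -> : (a, b) \notin g @: inv w by [].
apply/imsetP => -[[p q]]; rewrite inE /= => /andP[pq _] [ap bq].
have pb : p = b by rewrite -(tpermK a b p) -/s -ap tpermL.
have qa : q = a by rewrite -(tpermK a b q) -/s -bq tpermR.
by move: pq; rewrite pb qa; lia.
Qed.

Lemma stperm_fix j x : x != j.-1 :> nat -> x != j :> nat -> stperm j x = x.
Proof. by move=> xj' xj; apply: tpermD; rewrite eq_sym; [exact: xj' | exact: xj]. Qed.

Lemma stpermK j v : (stperm j * (stperm j * v) = v)%g.
Proof. by rewrite /stperm -{1}tpermV mulKg. Qed.

Lemma ascent_descentN j w : 0 < j -> (w (ord_prev j) < w j) = ~~ descent w j.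
Proof.
move=> j_gt0; rewrite /descent ltn_neqAle -leqNgt andb_idl // => _.
by rewrite (inj_eq val_inj) (inj_eq perm_inj) -(inj_eq val_inj) /=; apply/eqP; lia.
Qed.

Lemma descent_stperm j w : 0 < j -> descent (stperm j * w) j = ~~ descent w j.
Proof. by move=> j_gt0; rewrite /descent !permM /stperm tpermL tpermR ascent_descentN. Qed.

Lemma linv_stperm_asc j w : 0 < j -> ~~ descent w j -> linv (stperm j * w) = (linv w).+1.
Proof. by move=> j_gt0; rewrite -ascent_descentN // => /linv_tperm_adj; apply; apply: ord_prevS. Qed.

Lemma linv_stperm_desc j w : 0 < j -> descent w j -> linv w = (linv (stperm j * w)).+1.
Proof.
move=> j_gt0 dw; rewrite -[in LHS](stpermK j w) linv_stperm_asc //.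
by rewrite descent_stperm // dw.
Qed.

Lemma linv_stperm_lt j w : 0 < j -> (linv (stperm j * w) < linv w) = descent w j.
Proof.
move=> j_gt0; case dw: (descent w j); first by rewrite [X in _ < X](linv_stperm_desc j_gt0 dw) ltnSn.
by rewrite linv_stperm_asc ?dw // ltnNge leqnSn.
Qed.

Lemma linv_le w : linv w <= r * r.
Proof. by rewrite /linv (leq_trans (max_card _)) // card_prod card_ord. Qed.

Lemma stpermJ j (t : 'S_r) : (stperm j * t * stperm j = t ^ stperm j)%g.
Proof. by rewrite conjgE /stperm tpermV mulgA. Qed.

Lemma stperm_comm j k : j.+1 < k -> (stperm j * stperm k = stperm k * stperm j)%g.
Proof.
move=> jk; apply/esym/commgP/conjg_fixP.
by rewrite {1}/stperm tpermJ !stperm_fix //=; lia.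
Qed.

Lemma stperm_braid a b : 0 < a -> b = a.+1 :> nat ->
  (stperm a * stperm b * stperm a = stperm b * stperm a * stperm b)%g.
Proof.
move=> a_gt0 abS; rewrite !stpermJ.
have -> : stperm b = tperm a b by congr tperm; apply: val_inj => /=; rewrite abS.
rewrite /stperm !tpermJ tpermL tpermR !tpermD // -val_eqE /=; lia.
Qed.

Lemma descent_stperm_far j k v : (j.+1 < k) || (k.+1 < j) ->
  descent (stperm k * v) j = descent v j.
Proof. by move=> far; rewrite /descent !permM !stperm_fix //=; lia. Qed.

Lemma descent_braid a b v : 0 < a -> b = a.+1 :> nat -> descent v a -> descent v b ->
  [/\ descent (stperm a * v) b, descent (stperm b * (stperm a * v)) a,
      descent (stperm b * v) a & descent (stperm a * (stperm b * v)) b].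
Proof.
move=> a_gt0 abS dva dvb; have b_gt0 : 0 < b by rewrite abS.
have prev_b : ord_prev b = a by apply: val_inj => /=; rewrite abS.
have sa_b : stperm a b = b by apply: stperm_fix; lia.
have sb_pa : stperm b (ord_prev a) = ord_prev a by apply: stperm_fix => /=; lia.
have sa_a : stperm a a = ord_prev a by rewrite /stperm tpermR.
have sa_pa : stperm a (ord_prev a) = a by rewrite /stperm tpermL.
have sb_a : stperm b a = b by rewrite /stperm prev_b tpermL.
have sb_b : stperm b b = a by rewrite /stperm prev_b tpermR.
move: dva dvb; rewrite /descent prev_b => dva dvb.
by rewrite !permM ?(sa_b, sa_a, sb_a, sb_b, sa_pa, sb_pa); split; lia.
Qed.

Lemma redwordE w : redword w =
  if [pick i : 'I_r | (0 < val i) && (linv (sref r i * w)%g < linv w)] is Some i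
  then val i :: redword (sref r i * w)%g else [::].
Proof.
rewrite /redword; case lw: (linv w) => [|f] /=.
  by case: pickP => // i /andP[_]; rewrite ltn0.
rewrite -lw; case: pickP => // i /andP[i_gt0]; rewrite sref_stperm // linv_stperm_lt //.
by move=> /(linv_stperm_desc i_gt0); rewrite lw => -[<-].
Qed.

Lemma exists_ascent w : w != w0 r -> exists2 j : 'I_r, 0 < j & ~~ descent w j.
Proof.
move=> neq_w0; suff /existsP[j /andP[]] : [exists j : 'I_r, (0 < j) && ~~ descent w j] by exists j.
apply: contraNT neq_w0; rewrite negb_exists => /forallP no_asc; apply/eqP.
have desc (j : 'I_r) : 0 < j -> w j < w (ord_prev j).
  by move=> j_gt0; move: (no_asc j); rewrite j_gt0 negbK.
have upper m (lt_mr : m < r) : w (Ordinal lt_mr) + m <= r.-1.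
  elim: m lt_mr => [|m IHm] lt_mr; first by have := ltn_ord (w (Ordinal lt_mr)); lia.
  have lt_mr' : m < r by lia.
  have prevE : ord_prev (Ordinal lt_mr) = Ordinal lt_mr' by apply: val_inj.
  by have := desc (Ordinal lt_mr) isT; rewrite prevE; have := IHm lt_mr'; lia.
have lower d (lt_dr : r.-1 - d < r) : d < r -> d <= w (Ordinal lt_dr).
  elim: d lt_dr => [//|d IHd] lt_dr lt_dr1.
  have lt_dr' : r.-1 - d < r by lia.
  have prevE : ord_prev (Ordinal lt_dr') = Ordinal lt_dr by apply: val_inj => /=; lia.
  have := desc (Ordinal lt_dr') (ltac:(rewrite /=; lia)); rewrite prevE.
  by have := IHd lt_dr' (ltac:(lia)); lia.
apply/permP => x; apply: val_inj; rewrite /w0 permE /=.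
have lt_xr := ltn_ord x; have lt_rx : r.-1 - (r.-1 - x) < r by lia.
have xE : Ordinal lt_xr = x by apply: val_inj.
have rxE : Ordinal lt_rx = x by apply: val_inj => /=; lia.
by have := upper _ lt_xr; have := lower _ lt_rx (ltac:(lia)); rewrite xE rxE; lia.
Qed.

End SimpleTranspositions.

Local Open Scope ring_scope.

Lemma one_add_idem (R : pzRingType) (x : R) : x * x = - x -> (1 + x) * (1 + x) = 1 + x.
Proof. by move=> xx; rewrite !(mulrDl, mulrDr, mul1r, mulr1) xx subrr addr0. Qed.

Lemma one_add_braid (R : pzRingType) (x y : R) :
  x * x = - x -> y * y = - y -> x * y * x = y * x * y ->
  (1 + x) * (1 + y) * (1 + x) = (1 + y) * (1 + x) * (1 + y).
Proof.
have expand (s t : R) : s * s = - s ->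
    (1 + s) * (1 + t) * (1 + s) = 1 + s + t + s * t + t * s + s * t * s.
  move=> ss; rewrite !(mulrDl, mulrDr, mul1r, mulr1) ss.
  rewrite [s + t * s]addrC -[t * s + s + _]addrA [s + (- s + _)]addrA addrN add0r !addrA.
  by rewrite [1 + t + s]addrAC.
move=> xx yy xyx; rewrite !expand // xyx [1 + y + x]addrAC.
by rewrite [1 + x + y + y * x + x * y]addrAC.
Qed.

Section ZeroHecke.
Variables (A : falgType algC) (r : nat) (pb : nat -> A).
Hypothesis pb_quad : forall i, (1 <= i <= r.-1)%N -> pb i * pb i = - pb i.
Hypothesis pb_braid : forall i, (1 <= i)%N -> (i.+1 <= r.-1)%N ->
  pb i * pb i.+1 * pb i = pb i.+1 * pb i * pb i.+1.
Hypothesis pb_comm : forall i j, (1 <= i <= r.-1)%N -> (1 <= j <= r.-1)%N -> (i.+1 < j)%N ->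
  pb i * pb j = pb j * pb i.
Implicit Types (u v w : 'S_r) (a b j k : 'I_r).

Local Notation piw := (piw pb).

Definition factors_at_descents v := forall j, (0 < j)%N -> descent v j ->
  piw v = (1 + pb j) * piw (stperm j * v).

Lemma piw_first_letter v j : (0 < j)%N -> descent v j ->
  exists k, [/\ (0 < k)%N, descent v k & piw v = (1 + pb k) * piw (stperm k * v)].
Proof.
move=> j_gt0 dvj; rewrite /Defs.piw redwordE; case: pickP => [k /andP[k_gt0 lt_v]|/(_ j)].
  by exists k; rewrite big_cons sref_stperm -?linv_stperm_lt -?sref_stperm.
by rewrite j_gt0 sref_stperm // linv_stperm_lt // dvj.
Qed.

Section Exchange.
Variable v : 'S_r.
Hypothesis IHv : forall u, (linv u < linv v)%N -> factors_at_descents u.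

Lemma piw_far j k : (0 < j)%N -> (0 < k)%N -> (j.+1 < k)%N -> descent v j -> descent v k ->
  (1 + pb j) * piw (stperm j * v) = (1 + pb k) * piw (stperm k * v).
Proof.
move=> j_gt0 k_gt0 jk dvj dvk.
have lt_j : (linv (stperm j * v) < linv v)%N by rewrite linv_stperm_lt.
have lt_k : (linv (stperm k * v) < linv v)%N by rewrite linv_stperm_lt.
have dkj : descent (stperm k * v) j by rewrite descent_stperm_far ?jk.
have djk : descent (stperm j * v) k by rewrite descent_stperm_far // jk orbT.
rewrite (IHv lt_j k_gt0 djk) (IHv lt_k j_gt0 dkj) !mulgA (stperm_comm jk) !mulrA.
congr (_ * _).
have jr : (j < r)%N := ltn_ord j; have kr : (k < r)%N := ltn_ord k.
have pb_kj : GRing.comm (pb k) (pb j) by apply/esym/pb_comm; lia.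
exact: commrD (commr1 _) (commr_sym (commrD (commr1 _) pb_kj)).
Qed.

Lemma piw_adj a b : (0 < a)%N -> b = a.+1 :> nat -> descent v a -> descent v b ->
  (1 + pb a) * piw (stperm a * v) = (1 + pb b) * piw (stperm b * v).
Proof.
move=> a_gt0 abS dva dvb; have b_gt0 : (0 < b)%N by rewrite abS.
have [dab daba dba dbab] := descent_braid a_gt0 abS dva dvb.
have lt_a := linv_stperm_lt v a_gt0; have lt_b := linv_stperm_lt v b_gt0.
have lt_ab := linv_stperm_lt (stperm a * v) b_gt0.
have lt_ba := linv_stperm_lt (stperm b * v) a_gt0.
rewrite dva in lt_a; rewrite dvb in lt_b; rewrite dab in lt_ab; rewrite dba in lt_ba.
rewrite (IHv lt_a b_gt0 dab) (IHv (ltn_trans lt_ab lt_a) a_gt0 daba).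
rewrite (IHv lt_b a_gt0 dba) (IHv (ltn_trans lt_ba lt_b) b_gt0 dbab).
rewrite !mulgA stperm_braid // !mulrA; congr (_ * _).
have br : (b < r)%N := ltn_ord b.
by rewrite abS; apply: one_add_braid; [apply: pb_quad | apply: pb_quad | apply: pb_braid]; lia.
Qed.

End Exchange.

Lemma piw_descent v : factors_at_descents v.
Proof.
have [N] := ubnP (linv v); elim: N v => // N IH v lt_vN j j_gt0 dvj.
have IHv u : (linv u < linv v)%N -> factors_at_descents u by move=> lt_uv; apply: IH; lia.
have [k [k_gt0 dvk ->]] := piw_first_letter j_gt0 dvj.
have [-> //|neq_kj] := eqVneq k j.
move: neq_kj; rewrite -val_eqE /= => neq_kj.
have [far|[far|[adj|adj]]] : (k.+1 < j)%N \/ (j.+1 < k)%N \/ j = k.+1 :> nat \/ k = j.+1 :> nat.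
- by lia.
- exact: piw_far.
- exact/esym/piw_far.
- exact: piw_adj.
- exact/esym/piw_adj.
Qed.

Lemma piw_mulE j u : (0 < j)%N ->
  (1 + pb j) * piw u = if descent u j then piw u else piw (stperm j * u).
Proof.
move=> j_gt0; case: ifP => [duj | /negbT nduj].
  have jr : (j < r)%N := ltn_ord j.
  by rewrite (piw_descent j_gt0 duj) mulrA one_add_idem //; apply: pb_quad; lia.
by rewrite (piw_descent (v := stperm j * u) j_gt0) ?stpermK ?descent_stperm.
Qed.

Hypothesis piw_basis : basis_of fullv [seq piw w | w <- enum [set: 'S_r]].

Lemma piw_span m : exists c : 'S_r -> algC, m = \sum_w c w *: piw w.
Proof.
pose s := enum [set: 'S_r]; pose X := [seq piw w | w <- s].
rewrite [m](coord_basis (X := in_tuple X) piw_basis (memvf m)).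
exists (fun w => \sum_(i < size X | nth 1%g s i == w) coord (in_tuple X) i m).
rewrite (partition_big (fun i : 'I_(size X) => nth 1%g s i) predT) //=.
apply: eq_bigr => w _; rewrite scaler_suml; apply: eq_bigr => i /eqP <-.
by rewrite (nth_map 1%g) // -(size_map (@Defs.piw _ pb r)).
Qed.

Section FrobeniusForm.
Variable eps : A -> algC.
Hypothesis eps_linear : linear_for *%R eps.
Hypothesis eps_piw : forall w, eps (piw w) = (w == w0 r)%:R.
HB.instance Definition _ := GRing.isLinear.Build algC A algC *%R eps eps_linear.

Lemma eps_sum_piw (c : 'S_r -> algC) : eps (\sum_w c w *: piw w) = c (w0 r).
Proof.
rewrite linear_sum (bigD1 (w0 r)) //= big1 => [|w /negbTE w_neq].
  by rewrite linearZ /= eps_piw eqxx mulr1 addr0.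
by rewrite linearZ /= eps_piw w_neq mulr0.
Qed.

(* Left multiplication by [1 + pb j] maps [piw u] to [piw u] or [piw (stperm j * u)],
   so it moves the top coefficient of an element from [w] to [stperm j * w]. *)
Lemma mul_piw_sum_top (c : 'S_r -> algC) w j : (0 < j)%N -> ~~ descent w j ->
    (forall u, (linv w < linv u)%N -> c u = 0) ->
  exists c' : 'S_r -> algC, [/\ (1 + pb j) * \sum_u c u *: piw u = \sum_v c' v *: piw v,
    c' (stperm j * w)%g = c w & forall v, (linv (stperm j * w)%g < linv v)%N -> c' v = 0].
Proof.
move=> j_gt0 asc top; pose f u := if descent u j then u else (stperm j * u)%g.
have linv_f u : (linv (f u) <= (linv u).+1)%N.
  by rewrite /f; case: ifP => // /negbT ?; rewrite linv_stperm_asc.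
have linv_jw := linv_stperm_asc j_gt0 asc.
exists (fun v => \sum_(u | f u == v) c u); split.
- rewrite mulr_sumr (partition_big f xpredT) //=; apply: eq_bigr => v _.
  rewrite scaler_suml; apply: eq_bigr => u /eqP <-.
  by rewrite -scalerAr piw_mulE // /f; case: ifP.
- rewrite (bigD1 w) /=; last by rewrite /f (negbTE asc).
  rewrite big1 ?addr0 // => u /andP[/eqP]; rewrite /f; case: ifP => _ fu neq_uw.
    by apply: top; rewrite fu linv_jw.
  by move: neq_uw; rewrite -(stpermK j u) fu stpermK eqxx.
- move=> v lt_v; rewrite big1 // => u /eqP fu; apply: top.
  by have := linv_f u; rewrite fu; lia.
Qed.

Lemma eps_mul_top_coef (c : 'S_r -> algC) w : c w != 0 ->
    (forall u, (linv w < linv u)%N -> c u = 0) ->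
  exists x : A, eps (x * \sum_u c u *: piw u) != 0.
Proof.
have [N] := ubnP (r * r - linv w)%N; elim: N c w => // N IH c w lt_wN cw top.
have [w0E|neq_w0] := eqVneq w (w0 r).
  by exists 1; rewrite mul1r eps_sum_piw -w0E.
have [j j_gt0 asc] := exists_ascent neq_w0.
have [c' [cE c'w top']] := mul_piw_sum_top j_gt0 asc top.
have lt_jw := linv_stperm_asc j_gt0 asc; have le_jw := linv_le (stperm j * w).
have lt_jwN : (r * r - linv (stperm j * w) < N)%N by lia.
have [x x_neq0] := IH c' _ lt_jwN (ltac:(by rewrite c'w)) top'.
by exists (x * (1 + pb j)); rewrite -mulrA cE.
Qed.

Lemma eps_nondegenerate m : (forall x, eps (x * m) = 0) -> m = 0.
Proof.
move=> eps_am0; have [c mE] := piw_span m; rewrite mE in eps_am0 *.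
have [/existsP[w1 cw1]|/existsPn c0] := boolP [exists w, c w != 0]; last first.
  by rewrite big1 // => w _; move/negPn/eqP: (c0 w) => ->; rewrite scale0r.
have [w cw top] := @arg_maxnP _ w1 (fun w => c w != 0) (@linv r) cw1.
have top' u : (linv w < linv u)%N -> c u = 0.
  by move=> lt_wu; apply/eqP; apply: contraTT lt_wu => /top; rewrite -leqNgt.
by have [a] := eps_mul_top_coef cw top'; rewrite eps_am0 eqxx.
Qed.

End FrobeniusForm.

End ZeroHecke.

Section NondegenerateForm.
Variables (F : fieldType) (A : falgType F) (eps D : A -> F).
Hypothesis eps_linear : linear_for *%R eps.
Hypothesis D_linear : linear_for *%R D.
Hypothesis eps_nondeg : forall m, (forall x, eps (x * m) = 0) -> m = 0.
HB.instance Definition _ := GRing.isLinear.Build F A F *%R eps eps_linear.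
HB.instance Definition _ := GRing.isLinear.Build F A F *%R D D_linear.

(* The Gram matrix of [eps] on a basis is invertible by nondegeneracy. *)
Lemma nondegenerate_form_represents : exists h, forall z, eps (z * h) = D z.
Proof.
pose n := \dim {:A}; pose T := vbasis {:A}.
pose comb (x : 'rV[F]_n) := \sum_i x 0 i *: T`_i.
have combE z : z = comb (\row_i coord T i z).
  by rewrite {1}(coord_vbasis (memvf z)); apply: eq_bigr => i _; rewrite mxE.
pose G : 'M[F]_n := \matrix_(i, j) eps (T`_j * T`_i).
have eps_comb x (j : 'I_n) : eps (T`_j * comb x) = (x *m G) 0 j.
  rewrite mulr_sumr linear_sum mxE; apply: eq_bigr => i _.
  by rewrite -scalerAr linearZ mxE.
have eps_mul z h : eps (z * h) = \sum_j coord T j z * eps (T`_j * h).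
  rewrite {1}(coord_vbasis (memvf z)) mulr_suml linear_sum; apply: eq_bigr => j _.
  by rewrite -scalerAl linearZ.
have G_unit : G \in unitmx.
  rewrite -row_free_unit -kermx_eq0; apply/rowV0P => v /sub_kermxP vG0.
  have /eps_nondeg comb0 : forall z, eps (z * comb v) = 0.
    by move=> z; rewrite eps_mul big1 // => j _; rewrite eps_comb vG0 mxE mulr0.
  have /freeP T_free := basis_free (vbasisP {:A}).
  by apply/rowP => i; rewrite mxE (T_free _ comb0).
exists (comb ((\row_j D T`_j) *m invmx G)) => z.
rewrite eps_mul [in RHS](combE z) linear_sum; apply: eq_bigr => j _.
by rewrite eps_comb mulmxKV // linearZ !mxE.
Qed.

End NondegenerateForm.

Lemma big_orthogonal_idem (R : pzSemiRingType) (I : eqType) (s : seq I) (P : pred I)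
    (f : I -> R) :
  uniq s -> {in s &, forall b c, f b * f c = if b == c then f b else 0} ->
  (\sum_(b <- s | P b) f b) * (\sum_(b <- s | P b) f b) = \sum_(b <- s | P b) f b.
Proof.
move=> s_uniq orth; rewrite -big_filter; set t := filter P s.
have t_uniq : uniq t := filter_uniq P s_uniq.
have orth_t : {in t &, forall b c, f b * f c = if b == c then f b else 0}.
  by move=> b c; rewrite !mem_filter => /andP[_ bs] /andP[_ cs]; apply: orth.
rewrite mulr_suml; apply: eq_big_seq => b bt.
rewrite mulr_sumr (bigD1_seq b) //= orth_t // eqxx big_seq_cond big1 ?addr0 // => c /andP[ct cb].
by rewrite orth_t // eq_sym (negbTE cb).
Qed.

Lemma comps_pos r c : c \in comps r -> all (fun k => 0 < k)%N c.
Proof.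
elim: r c => [|r IHr] c /=; first by rewrite inE => /eqP ->.
rewrite mem_cat => /orP[/mapP [c' c'r ->]|/mapP [c']] /=; first exact: IHr.
rewrite mem_filter => /andP [c'_neq0 /IHr]; move=> + ->.
by case: c' c'_neq0 => //= x t _ /andP[].
Qed.

Lemma comps_uniq r : uniq (comps r).
Proof.
elim: r => [|r IHr] //=; rewrite cat_uniq map_inj_uniq ?IHr; last by move=> x y [].
rewrite map_inj_in_uniq ?filter_uniq ?IHr //=.
  apply/andP; split => //; apply/hasPn => y /mapP [c]; rewrite mem_filter => /andP[c_neq0 cr] ->.
  by apply/mapP => [[c' _ e]]; have := comps_pos cr; case: c c_neq0 cr e => //= x t _ _ [->].
move=> c1 c2; rewrite !mem_filter => /andP[c1_neq0 _] /andP[c2_neq0 _].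
by case: c1 c1_neq0 => // x1 t1 _; case: c2 c2_neq0 => // x2 t2 _ /= [-> ->].
Qed.

Unset Implicit Arguments.
Set Strict Implicit.

Theorem mainTheorem12 (A : falgType algC) (r n : nat) (pb : nat -> A)
    (eps : A -> algC) (phi : A -> A) (chi : seq nat -> A -> algC) (ec : seq nat -> A)
    (alpha : seq nat) :
  is_zero_Hecke r pb -> is_eps r pb eps -> is_phi r pb eps phi ->
  is_PIM_idempotents r pb chi ec -> alpha \in comps r ->
  let e := etrunc r n ec in
  let ea := ec alpha in
  let inN x := exists a : A, x = ea * a * e in      (* x in e_alpha H e *)
  let inE y := exists a : A, y = e * a * e in       (* y in e H e *)
  [/\ (* Theta is well defined *)
      forall h h', e * h * phi ea = e * h' * phi ea ->
        forall x, inN x -> eps (x * h) = eps (x * h'),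
      (* Theta is C-linear *)
      forall (c : algC) h1 h2 h, c *: (e * h1 * phi ea) + e * h2 * phi ea = e * h * phi ea ->
        forall x, inN x -> eps (x * h) = c * eps (x * h1) + eps (x * h2),
      (* Theta is a homomorphism of left eHe-modules: Theta(y.m) = y.Theta(m) *)
      forall y h h', inE y -> y * (e * h * phi ea) = e * h' * phi ea ->
        forall x, inN x -> eps (x * h') = eps ((x * y) * h),
      (* Theta is injective *)
      forall h, (forall x, inN x -> eps (x * h) = 0) -> e * h * phi ea = 0
    & (* Theta is surjective onto (e_alpha H e)^* *)
      forall delta : A -> algC,
        (forall c x x', inN x -> inN x' -> delta (c *: x + x') = c * delta x + delta x') ->
        exists h, forall x, inN x -> eps (x * h) = delta x].
Proof.
move=> [pb_quad pb_braid pb_comm piw_basis] [eps_linear eps_piw] [_ _ _ _ nakayama].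
move=> [_ _ orth _ _] alpha_r e ea inN inE.
have eps_nondeg := eps_nondegenerate pb_quad pb_braid pb_comm piw_basis eps_linear eps_piw.
have theta a h : eps (ea * a * e * h) = eps (a * (e * h * phi ea)).
  by rewrite -!mulrA nakayama !mulrA.
have eaK : ea * ea = ea by rewrite orth ?eqxx.
have eK z : z * e * e = z * e.
  by rewrite -mulrA big_orthogonal_idem ?comps_uniq // => b c br cr; apply: orth.
split.
- by move=> h h' E x [a ->]; rewrite !theta E.
- by move=> c h1 h2 h E x [a ->]; rewrite !theta -E mulrDr -scalerAr eps_linear.
- move=> y h h' [b ->] E x [a ->].
  have -> : ea * a * e * (e * b * e) * h = ea * (a * e * b) * e * h by rewrite !mulrA eK.
  by rewrite !theta -E !mulrA eK.
- by move=> h eps_h0; apply: eps_nondeg => a; rewrite -theta; apply: eps_h0; exists a.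
move=> delta delta_linear.
have D_linear : linear_for *%R (fun z => delta (ea * z * e)).
  move=> c a b; rewrite mulrDr mulrDl -scalerAr -scalerAl.
  by apply: delta_linear; [exists a | exists b].
have [h hD] := nondegenerate_form_represents eps_linear D_linear eps_nondeg.
by exists h => x [a ->]; rewrite hD !mulrA eaK eK.
Qed.
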